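(* Let $U,V\subset\mathcal{A}_0$ be compact sets such that $U^T$ and $V^T$ are complete. Then the following are equivalent: (a) $U^{**}=V^{**}$; (b) $U^T=V^T$; (c) $U^*=V^*$.
   Context: $D=\{z:|z|<1\}$, $\overline D$ its closure. $\mathcal{A}$ is the space of functions $f(z)=\sum_{k\ge0}a_k(f)z^k$ analytic in $D$, with the topology of locally uniform convergence; $\mathcal{A}_0=\{f\in\mathcal{A}: a_0(f)=1\}$. $\mathcal{A}(\overline D)$ is the set of functions analytic in some disk $\{|z|<R\}$ with $R>1$, and $\mathcal{A}_0(\overline D)=\{g\in\mathcal{A}(\overline D):a_0(g)=1\}$. The Hadamard product is $(f*g)(z)=\sum_{k\ge0}a_k(f)a_k(g)z^k$. For $V\subset\mathcal{A}_0$, $V^*=\{g\in\mathcal{A}_0:(f*g)(z)\ne0 \ \forall z\in D,\ \forall f\in V\}$, $V^{**}=(V^* )^*$, and $V^T=\{g\in\mathcal{A}_0(\overline D): (f*g)(1)\ne0 \ \forall f\in V\}$. For $x\in\overline D$, $(P_xf)(z)=f(xz)$; a set $W$ is complete if $P_xf\in W$ for all $f\in W$, $x\in\overline D$. *)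

From Stdlib Require Import Reals.
From Coquelicot Require Import Coquelicot.
Open Scope R_scope.

(* A power series f(z) = sum_k a_k z^k is represented by its coefficient
   sequence a : nat -> C.  Subsets of A are predicates on coefficient
   sequences. *)
Definition coeffs := nat -> C.

Fixpoint cpow (z : C) (n : nat) : C :=
  match n with O => RtoC 1 | S m => Cmult z (cpow z m) end.

Definition term (a : coeffs) (z : C) : nat -> C := fun k => Cmult (a k) (cpow z k).

(* f is analytic in D = {|z|<1}: its Taylor series converges on D *)
Definition in_A (a : coeffs) : Prop :=
  forall z : C, Cmod z < 1 -> ex_series (term a z).

Definition in_A0 (a : coeffs) : Prop := in_A a /\ a O = RtoC 1.

Definition in_AbarD (a : coeffs) : Prop :=
  exists R : R, 1 < R /\ forall z : C, Cmod z < R -> ex_series (term a z).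

Definition in_AbarD0 (a : coeffs) : Prop := in_AbarD a /\ a O = RtoC 1.

Definition hadamard (a b : coeffs) : coeffs := fun k => Cmult (a k) (b k).

Definition nonzero_at (a : coeffs) (z : C) : Prop :=
  forall l : C, is_series (term a z) l -> l <> RtoC 0.

Definition dual (V : coeffs -> Prop) : coeffs -> Prop :=
  fun g => in_A0 g /\
    forall f, V f -> forall z : C, Cmod z < 1 -> nonzero_at (hadamard f g) z.

Definition dualT (V : coeffs -> Prop) : coeffs -> Prop :=
  fun g => in_AbarD0 g /\ forall f, V f -> nonzero_at (hadamard f g) (RtoC 1).

(* (P_x f)(z) = f(xz) : coefficients a_k x^k *)
Definition Px (x : C) (a : coeffs) : coeffs := fun k => Cmult (a k) (cpow x k).

Definition complete (W : coeffs -> Prop) : Prop :=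
  forall f, W f -> forall x : C, Cmod x <= 1 -> W (Px x f).

Definition loc_unif_cvg (fs : nat -> coeffs) (f : coeffs) : Prop :=
  forall r : R, 0 < r < 1 -> forall eps : R, 0 < eps ->
  exists N : nat, forall n : nat, (N <= n)%nat ->
  forall z : C, Cmod z <= r ->
  forall l1 l2 : C, is_series (term (fs n) z) l1 -> is_series (term f z) l2 ->
  Cmod (Cminus l1 l2) < eps.

(* compactness in A (topology of locally uniform convergence; A is
   metrizable, so compactness = sequential compactness) *)
Definition compact_A (U : coeffs -> Prop) : Prop :=
  forall fs : nat -> coeffs, (forall n, U (fs n)) ->
  exists (phi : nat -> nat) (f : coeffs),
    (forall n, (phi n < phi (S n))%nat) /\ U f /\
    loc_unif_cvg (fun n => fs (phi n)) f.

Definition set_eq (U V : coeffs -> Prop) : Prop := forall f, U f <-> V f.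

From Stdlib Require Import Reals Lra Lia Classical ClassicalEpsilon.
From Coquelicot Require Import Coquelicot.
Open Scope R_scope.

(* (a) <=> (c) is formal: for W in A_0 we have W in W** and duality reverses
   inclusions, so W*** = W*.  Since (f * P_x g)(z) = (f * g)(x z), a function g lies
   in U* exactly when P_z g lies in U^T for every |z| < 1, which gives (b) => (c).
   For (c) => (b), let g be in U^T.  Completeness of U^T says that f * g has no zero
   in the closed unit disk for f in U, and compactness of U pushes this to a disk
   |z| < rho with rho > 1: zeros of f_n * g approaching the closed disk would produce,
   via a limit f of the f_n, a zero of f * g in it.  The passage to the limit uses
   Cauchy estimates (obtained by averaging over roots of unity), which turn locally
   uniform convergence in D into uniform convergence of f_n * g on a disk of radius
   greater than 1.  Then P_s g is in U* = V* for some s > 1, and evaluating at 1/s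
   shows that g is in V^T. *)

Lemma cpow_mult (x y : C) n : cpow (x * y) n = (cpow x n * cpow y n)%C.
Proof. induction n; simpl; [ring | rewrite IHn; ring]. Qed.

Lemma cpow_add (x : C) m n : cpow x (m + n) = (cpow x m * cpow x n)%C.
Proof. induction m; simpl; [ring | rewrite IHm; ring]. Qed.

Lemma cpow_pow (x : C) m n : cpow (cpow x m) n = cpow x (m * n).
Proof.
  induction n; simpl.
  - now rewrite Nat.mul_0_r.
  - rewrite IHn, <- cpow_add. f_equal. lia.
Qed.

Lemma cpow_1 n : cpow (RtoC 1) n = RtoC 1.
Proof. induction n; simpl; [reflexivity | rewrite IHn; ring]. Qed.

Lemma Cmod_cpow (x : C) n : Cmod (cpow x n) = Cmod x ^ n.
Proof. induction n; simpl; [apply Cmod_1 | now rewrite Cmod_mult, IHn]. Qed.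

Lemma Cmod_RtoC (x : R) : 0 <= x -> Cmod (RtoC x) = x.
Proof. intros Hx. rewrite Cmod_R. now apply Rabs_pos_eq. Qed.

Lemma Cmod_sub_sym (x y : C) : Cmod (x - y) = Cmod (y - x).
Proof. rewrite <- Cmod_opp. f_equal. ring. Qed.

Lemma Cmod_sub_triangle (x y z : C) : Cmod (x - z) <= Cmod (x - y) + Cmod (y - z).
Proof. replace (x - z)%C with ((x - y) + (y - z))%C by ring. apply Cmod_triangle. Qed.

Lemma Cmod_le_Rabs_re_im (z : C) : Cmod z <= Rabs (fst z) + Rabs (snd z).
Proof.
  destruct z as [x y]. unfold Cmod; simpl.
  rewrite <- (sqrt_pow2 (Rabs x + Rabs y)) by (generalize (Rabs_pos x) (Rabs_pos y); lra).
  apply sqrt_le_1_alt.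
  assert (Rabs x * Rabs x = x * x) by (rewrite <- Rabs_mult; apply Rabs_pos_eq; nra).
  assert (Rabs y * Rabs y = y * y) by (rewrite <- Rabs_mult; apply Rabs_pos_eq; nra).
  generalize (Rabs_pos x) (Rabs_pos y). nra.
Qed.

Lemma pow_eventually_lt c q eps : 0 <= q < 1 -> 0 < eps ->
  exists N, forall n, (N <= n)%nat -> c * q ^ n < eps.
Proof.
  intros Hq Heps.
  destruct (pow_lt_1_zero q ltac:(rewrite Rabs_pos_eq; lra) (eps / (Rabs c + 1)))
    as [N HN]; [apply Rdiv_lt_0_compat; generalize (Rabs_pos c); lra|].
  exists N. intros n Hn. specialize (HN n Hn).
  rewrite Rabs_pos_eq in HN by (apply pow_le; lra).
  assert (0 <= q ^ n) by (apply pow_le; lra).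
  assert (Hc : c * q ^ n <= Rabs c * q ^ n) by (apply Rmult_le_compat_r; [lra | apply Rle_abs]).
  assert (q ^ n * (Rabs c + 1) < eps).
  { apply (Rmult_lt_compat_r (Rabs c + 1)) in HN; [|generalize (Rabs_pos c); lra].
    now replace (eps / (Rabs c + 1) * (Rabs c + 1)) with eps in HN by (field; generalize (Rabs_pos c); lra). }
  nra.
Qed.

Lemma le_of_le_plus_pow x y c q n0 : 0 <= q < 1 ->
  (forall n, (n0 <= n)%nat -> x <= y + c * q ^ n) -> x <= y.
Proof.
  intros Hq H. apply Rnot_lt_le. intros Hyx.
  destruct (pow_eventually_lt c q (x - y) Hq ltac:(lra)) as [N HN].
  specialize (HN (max N n0) ltac:(lia)). specialize (H (max N n0) ltac:(lia)). lra.
Qed.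

(* [csum f n] is the sum of the first [n] terms, whereas Coquelicot's [sum_n f n] has [n + 1]. *)
Fixpoint csum (f : nat -> C) (n : nat) : C :=
  match n with O => RtoC 0 | S m => (csum f m + f m)%C end.

Lemma csum_ext f g n : (forall k, (k < n)%nat -> f k = g k) -> csum f n = csum g n.
Proof. induction n; intros H; simpl; [reflexivity | rewrite IHn, H; auto]. Qed.

Lemma csum_scal c f n : csum (fun k => c * f k)%C n = (c * csum f n)%C.
Proof. induction n; simpl; [ring | rewrite IHn; ring]. Qed.

Lemma csum_const_1 n : csum (fun _ => RtoC 1) n = RtoC (INR n).
Proof.
  induction n; [reflexivity|].
  cbn [csum]. rewrite IHn, S_INR, <- RtoC_plus. reflexivity.
Qed.

Lemma csum_norm_le f n M : (forall k, (k < n)%nat -> Cmod (f k) <= M) ->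
  Cmod (csum f n) <= INR n * M.
Proof.
  induction n; intros H; cbn [csum].
  - rewrite Cmod_0. simpl. lra.
  - eapply Rle_trans; [apply Cmod_triangle|]. rewrite S_INR.
    assert (Cmod (csum f n) <= INR n * M) by auto.
    assert (Cmod (f n) <= M) by auto. lra.
Qed.

Lemma csum_single f n k : (k < n)%nat ->
  (forall m, (m < n)%nat -> m <> k -> f m = RtoC 0) -> csum f n = f k.
Proof.
  induction n; intros Hk H; [lia|]. simpl.
  destruct (Nat.eq_dec k n) as [->|Hkn].
  - assert (Z : forall p, (p <= n)%nat -> csum f p = RtoC 0).
    { induction p; intros Hp; simpl; [reflexivity|]. rewrite IHp, H by lia. ring. }
    rewrite Z by lia. ring.
  - rewrite IHn, (H n) by (auto; lia). ring.
Qed.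

Lemma csum_geom (z : C) N : ((z - 1) * csum (cpow z) N = cpow z N - 1)%C.
Proof. induction N; simpl; [ring | rewrite Cmult_plus_distr_l, IHN; ring]. Qed.

Lemma sum_n_csum (a : nat -> C) n : sum_n a n = csum a (S n).
Proof.
  induction n.
  - rewrite sum_O. simpl. change (a O = RtoC 0 + a O)%C. ring.
  - rewrite sum_Sn, IHn. reflexivity.
Qed.

Lemma is_series_C_eps (a : nat -> C) (l : C) : is_series a l <->
  forall eps, 0 < eps -> exists N, forall n, (N <= n)%nat -> Cmod (csum a n - l) < eps.
Proof.
  split.
  - intros H eps Heps.
    destruct (proj1 (filterlim_locally_ball_norm _ _) H (mkposreal eps Heps)) as [N HN].
    exists (S N). intros [|n] Hn; [lia|]. rewrite <- sum_n_csum. apply HN. lia.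
  - intros H. apply filterlim_locally_ball_norm. intros eps.
    destruct (H eps (cond_pos eps)) as [N HN].
    exists N. intros n Hn. unfold ball_norm. rewrite sum_n_csum. apply HN. lia.
Qed.

Lemma is_series_C_unique (a : nat -> C) (l1 l2 : C) :
  is_series a l1 -> is_series a l2 -> l1 = l2.
Proof. apply filterlim_locally_unique. Qed.

Lemma is_series_C_dist_le (a : nat -> C) (l x : C) M N0 : is_series a l ->
  (forall n, (N0 <= n)%nat -> Cmod (csum a n - x) <= M) -> Cmod (l - x) <= M.
Proof.
  intros H HM. apply Rnot_lt_le. intros HMl.
  destruct (proj1 (is_series_C_eps a l) H (Cmod (l - x) - M) ltac:(lra)) as [N HN].
  specialize (HN (max N N0) ltac:(lia)). specialize (HM (max N N0) ltac:(lia)).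
  generalize (Cmod_sub_triangle l (csum a (max N N0)) x).
  rewrite (Cmod_sub_sym l (csum a _)). lra.
Qed.

Lemma is_series_csum (f : nat -> nat -> C) (L : nat -> C) N :
  (forall j, (j < N)%nat -> is_series (f j) (L j)) ->
  is_series (fun m => csum (fun j => f j m) N) (csum L N).
Proof.
  induction N; intros H; simpl.
  - apply is_series_C_eps. intros eps Heps. exists O. intros n _.
    replace (csum (fun _ => RtoC 0) n) with (RtoC 0)
      by (induction n; simpl; [reflexivity | rewrite <- IHn; ring]).
    replace (RtoC 0 - RtoC 0)%C with (RtoC 0) by ring. rewrite Cmod_0. lra.
  - apply (is_series_plus (V := C_NormedModule)); [apply IHN; auto | apply H; lia].
Qed.

Lemma series_terms_bounded (a : nat -> C) (l : C) : is_series a l ->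
  exists M, forall k, Cmod (a k) <= M.
Proof.
  intros H. destruct (filterlim_bounded (sum_n a) (ex_intro _ l H)) as [M HM].
  exists (2 * M). assert (0 <= M) by (specialize (HM O); generalize (norm_ge_0 (sum_n a O)); lra).
  intros [|k].
  - specialize (HM O). rewrite sum_O in HM. change (Cmod (a O) <= M) in HM. lra.
  - replace (a (S k)) with (sum_n a (S k) - sum_n a k)%C
      by (rewrite sum_Sn; change (plus (sum_n a k) (a (S k))) with (sum_n a k + a (S k))%C; ring).
    unfold Cminus. eapply Rle_trans; [apply Cmod_triangle|]. rewrite Cmod_opp.
    generalize (HM (S k)) (HM k). change norm with Cmod. lra.
Qed.

Section Dominated.

Variables (a : nat -> C) (M q : R).
Hypotheses (Hq : 0 <= q < 1) (Ha : forall k, Cmod (a k) <= M * q ^ k).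

Lemma dominated_csum_diff n m : (n <= m)%nat ->
  Cmod (csum a m - csum a n) <= M * (q ^ n - q ^ m) / (1 - q).
Proof.
  induction 1.
  - replace (csum a n - csum a n)%C with (RtoC 0) by ring. rewrite Cmod_0.
    replace (M * (q ^ n - q ^ n) / (1 - q)) with 0 by (field; lra). lra.
  - cbn [csum].
    replace (csum a m + a m - csum a n)%C with ((csum a m - csum a n) + a m)%C by ring.
    eapply Rle_trans; [apply Cmod_triangle|]. specialize (Ha m).
    replace (M * (q ^ n - q ^ S m) / (1 - q)) with (M * (q ^ n - q ^ m) / (1 - q) + M * q ^ m)
      by (simpl; field; lra). lra.
Qed.

Lemma dominated_ex_series : exists l : C, is_series a l.
Proof.
  assert (E : ex_series a).
  { apply (ex_series_le (V := C_CompleteNormedModule) a (fun k => M * q ^ k)); [apply Ha|].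
    exists (M * / (1 - q)). apply (is_series_scal_l (V := R_NormedModule)).
    apply is_series_geom. rewrite Rabs_pos_eq; lra. }
  destruct E as [l Hl]. now exists l.
Qed.

Lemma dominated_tail (l : C) n : is_series a l -> Cmod (l - csum a n) <= M * q ^ n / (1 - q).
Proof.
  intros Hl. apply (is_series_C_dist_le _ _ _ _ n Hl). intros m Hm.
  eapply Rle_trans; [apply (dominated_csum_diff n m Hm)|].
  assert (0 <= M) by (specialize (Ha O); simpl in Ha; generalize (Cmod_ge_0 (a O)); lra).
  assert (0 <= q ^ m) by (apply pow_le; lra).
  apply Rmult_le_compat_r; [apply Rlt_le, Rinv_0_lt_compat; lra | nra].
Qed.

Lemma dominated_sum_le (l : C) : is_series a l -> Cmod l <= M / (1 - q).
Proof.
  intros Hl. generalize (dominated_tail l O Hl). simpl.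
  now replace (l - RtoC 0)%C with l by ring; rewrite Rmult_1_r.
Qed.

End Dominated.

Lemma coeff_bound (a : coeffs) R s : (forall z, Cmod z < R -> ex_series (term a z)) ->
  0 <= s < R -> exists M, forall k, Cmod (a k) * s ^ k <= M.
Proof.
  intros H Hs. destruct (H (RtoC s)) as [l Hl]; [rewrite Cmod_RtoC; lra|].
  destruct (series_terms_bounded _ l Hl) as [M HM]. exists M. intros k.
  specialize (HM k). unfold term in HM. now rewrite Cmod_mult, Cmod_cpow, Cmod_RtoC in HM by lra.
Qed.

Lemma Cmod_term_le (c : coeffs) w rho k : Cmod w <= rho ->
  Cmod (term c w k) <= Cmod (c k) * rho ^ k.
Proof.
  intros H. unfold term. rewrite Cmod_mult, Cmod_cpow.
  apply Rmult_le_compat_l; [apply Cmod_ge_0|]. apply pow_incr. split; [apply Cmod_ge_0 | exact H].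
Qed.

Lemma term_dominated (c : coeffs) rho Cc th w :
  (forall k, Cmod (c k) * rho ^ k <= Cc * th ^ k) -> Cmod w <= rho ->
  forall k, Cmod (term c w k) <= Cc * th ^ k.
Proof. intros Hc Hw k. eapply Rle_trans; [apply Cmod_term_le, Hw | apply Hc]. Qed.

Lemma cpow_cos_sin t n : cpow (cos t, sin t) n = (cos (INR n * t), sin (INR n * t)).
Proof.
  induction n; cbn [cpow].
  - rewrite Rmult_0_l, cos_0, sin_0. reflexivity.
  - rewrite IHn, S_INR. replace ((INR n + 1) * t) with (t + INR n * t) by ring.
    rewrite cos_plus, sin_plus. unfold Cmult; simpl. f_equal; ring.
Qed.

Lemma Cmod_cos_sin t : Cmod (cos t, sin t) = 1.
Proof.
  unfold Cmod; simpl. assert (H := sin2_cos2 t). unfold Rsqr in H.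
  replace (cos t * (cos t * 1) + sin t * (sin t * 1)) with 1 by nra. apply sqrt_1.
Qed.

Definition unit_root (N : nat) : C := (cos (2 * PI / INR N), sin (2 * PI / INR N)).

Lemma Cmod_unit_root_pow N j : Cmod (cpow (unit_root N) j) = 1.
Proof. rewrite Cmod_cpow. unfold unit_root. rewrite Cmod_cos_sin. apply pow1. Qed.

Lemma unit_root_pow_N N : (0 < N)%nat -> cpow (unit_root N) N = RtoC 1.
Proof.
  intros H. unfold unit_root. rewrite cpow_cos_sin.
  replace (INR N * (2 * PI / INR N)) with (2 * PI) by (field; apply not_0_INR; lia).
  rewrite cos_2PI, sin_2PI. reflexivity.
Qed.

(* [sin t = 0] with [0 < t < 4 PI] leaves [t = PI, 2 PI, 3 PI], and [cos t = 1] only at [2 PI]. *)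
Lemma unit_root_pow_neq_1 N s : (0 < s < 2 * N)%nat -> s <> N ->
  cpow (unit_root N) s <> RtoC 1.
Proof.
  intros Hs HsN E. unfold unit_root in E. rewrite cpow_cos_sin in E.
  injection E as Hcos Hsin.
  set (th := INR s * (2 * PI / INR N)) in *.
  assert (HN : 0 < INR N) by (apply lt_0_INR; lia).
  assert (Hs2 : INR s < 2 * INR N)
    by (replace (2 * INR N) with (INR (2 * N)) by (rewrite mult_INR; simpl; ring); apply lt_INR; lia).
  assert (HPI := PI_RGT_0).
  assert (Hth : 0 < th < 4 * PI).
  { unfold th. replace (INR s * (2 * PI / INR N)) with (2 * PI * (INR s / INR N)) by (field; lra).
    assert (0 < INR s / INR N < 2).
    { split; [apply Rdiv_lt_0_compat; [apply lt_0_INR; lia | lra]|].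
      apply Rmult_lt_reg_r with (INR N); [lra|]. field_simplify; lra. }
    nra. }
  destruct (sin_eq_0_0 th Hsin) as [k Hk].
  assert (Hk14 : (0 < k < 4)%Z) by (rewrite Hk in Hth; split; apply lt_IZR; nra).
  assert (Hk' : k = 1%Z \/ k = 2%Z \/ k = 3%Z) by lia.
  destruct Hk' as [-> | [-> | ->]].
  - rewrite Hk, Rmult_1_l, cos_PI in Hcos. lra.
  - apply HsN, INR_eq. apply Rmult_eq_reg_r with (2 * PI / INR N).
    + unfold th in Hk. rewrite Hk. field. lra.
    + apply Rgt_not_eq, Rdiv_lt_0_compat; lra.
  - rewrite Hk in Hcos. replace (IZR 3 * PI) with (PI + 2 * INR 1 * PI) in Hcos by (simpl; ring).
    rewrite cos_period, cos_PI in Hcos. lra.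
Qed.

Lemma unit_root_sum_0 N s : (0 < s < 2 * N)%nat -> s <> N ->
  csum (fun j => cpow (unit_root N) (j * s)) N = RtoC 0.
Proof.
  intros Hs HsN. set (z := cpow (unit_root N) s).
  rewrite (csum_ext _ (cpow z)) by (intros; unfold z; rewrite cpow_pow; f_equal; lia).
  assert (Hz1 : (z - 1)%C <> RtoC 0).
  { intros Z. apply (unit_root_pow_neq_1 N s Hs HsN). fold z.
    replace z with ((z - 1) + 1)%C by ring. rewrite Z. ring. }
  assert (E : ((z - 1) * csum (cpow z) N = 0)%C).
  { rewrite csum_geom. unfold z.
    rewrite cpow_pow, Nat.mul_comm, <- cpow_pow, unit_root_pow_N, cpow_1 by lia. ring. }
  apply Cmod_eq_0. apply (f_equal Cmod) in E. rewrite Cmod_mult, Cmod_0 in E.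
  apply Cmod_gt_0 in Hz1. apply Rmult_integral in E. destruct E; [lra | assumption].
Qed.

(* Averaging [sum_m d_m z^m] over the points [r w^j] of the circle, with weights
   [w^(j (N - k))], filters out every [m < N] except [m = k]. *)
Lemma unit_root_average (d : coeffs) r q D N k (L : nat -> C) :
  0 < r -> 0 <= q < 1 -> (forall m, Cmod (d m) * r ^ m <= D * q ^ m) -> (k < N)%nat ->
  (forall j, is_series (term d (RtoC r * cpow (unit_root N) j)) (L j)) ->
  Cmod (csum (fun j => cpow (unit_root N) (j * (N - k)) * L j)%C N
        - d k * cpow (RtoC r) k * RtoC (INR N))
  <= INR N * D * q ^ N / (1 - q).
Proof.
  intros Hr Hq HD Hk HL.
  set (w := unit_root N). set (e := (N - k)%nat).
  set (E := fun m => csum (fun j => cpow w (j * (m + e))) N).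
  set (t := fun m => csum (fun j => cpow w (j * e) * term d (RtoC r * cpow w j) m)%C N).
  assert (Ht : forall m, t m = (d m * cpow (RtoC r) m * E m)%C).
  { intros m. unfold t, E. rewrite <- csum_scal. apply csum_ext. intros j _.
    unfold term. rewrite cpow_mult, cpow_pow.
    replace (j * (m + e))%nat with (j * e + j * m)%nat by ring. rewrite cpow_add. ring. }
  assert (HS : is_series t (csum (fun j => cpow w (j * e) * L j)%C N)).
  { apply (is_series_csum (fun j m => cpow w (j * e) * term d (RtoC r * cpow w j) m)%C).
    intros j _. apply (is_series_scal (V := C_NormedModule)), HL. }
  assert (Hdom : forall m, Cmod (t m) <= INR N * D * q ^ m).
  { intros m. rewrite Ht, !Cmod_mult, Cmod_cpow, Cmod_RtoC by lra.
    assert (HE : Cmod (E m) <= INR N).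
    { rewrite <- (Rmult_1_r (INR N)). apply csum_norm_le. intros j _.
      unfold w. rewrite Cmod_unit_root_pow. lra. }
    specialize (HD m). generalize (Cmod_ge_0 (E m)) (Cmod_ge_0 (d m)).
    assert (0 <= r ^ m) by (apply pow_le; lra). intros.
    assert (Cmod (d m) * r ^ m * Cmod (E m) <= D * q ^ m * INR N)
      by (apply Rmult_le_compat; nra).
    lra. }
  assert (Hsum : csum t N = (d k * cpow (RtoC r) k * RtoC (INR N))%C).
  { rewrite (csum_single t N k Hk).
    - rewrite Ht. f_equal. unfold E. rewrite <- csum_const_1. apply csum_ext. intros j _.
      replace (k + e)%nat with N by lia. unfold w.
      now rewrite Nat.mul_comm, <- cpow_pow, unit_root_pow_N, cpow_1 by lia.
    - intros m Hm Hmk. rewrite Ht. unfold E, w. rewrite unit_root_sum_0; [ring | lia | lia]. }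
  rewrite <- Hsum. exact (dominated_tail t _ q Hq Hdom _ N HS).
Qed.

Lemma cauchy_estimate (d : coeffs) r q D eps : 0 < r -> 0 <= q < 1 ->
  (forall k, Cmod (d k) * r ^ k <= D * q ^ k) ->
  (forall z, Cmod z = r -> forall l, is_series (term d z) l -> Cmod l <= eps) ->
  forall k, Cmod (d k) * r ^ k <= eps.
Proof.
  intros Hr Hq HD Heps k.
  apply (le_of_le_plus_pow _ _ (D / (1 - q)) q (S k) Hq). intros N HN.
  assert (HN0 : 0 < INR N) by (apply lt_0_INR; lia).
  assert (Hz : forall j, Cmod (RtoC r * cpow (unit_root N) j) = r)
    by (intros j; rewrite Cmod_mult, Cmod_RtoC, Cmod_unit_root_pow by lra; ring).
  destruct (choice (fun j l => is_series (term d (RtoC r * cpow (unit_root N) j)) l)) as [L HL].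
  { intros j. apply (dominated_ex_series _ D q Hq). intros m.
    unfold term. rewrite Cmod_mult, Cmod_cpow, Hz. apply HD. }
  assert (Havg := unit_root_average d r q D N k L Hr Hq HD HN HL).
  assert (HS : Cmod (csum (fun j => cpow (unit_root N) (j * (N - k)) * L j)%C N) <= INR N * eps).
  { apply csum_norm_le. intros j _. rewrite Cmod_mult, Cmod_unit_root_pow, Rmult_1_l.
    apply (Heps _ (Hz j)), HL. }
  set (S := csum _ N) in Havg, HS.
  set (X := (d k * cpow (RtoC r) k * RtoC (INR N))%C) in Havg.
  assert (HX : Cmod X = Cmod (d k) * r ^ k * INR N)
    by (unfold X; rewrite !Cmod_mult, Cmod_cpow, !Cmod_RtoC by (auto using pos_INR; lra); ring).
  assert (Htri : Cmod X <= Cmod (S - X) + Cmod S).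
  { rewrite Cmod_sub_sym. replace X with ((X - S) + S)%C at 1 by ring. apply Cmod_triangle. }
  apply Rmult_le_reg_r with (INR N); [exact HN0|].
  replace ((eps + D / (1 - q) * q ^ N) * INR N) with (INR N * eps + INR N * D * q ^ N / (1 - q))
    by (field; lra).
  lra.
Qed.

Definition cluster_point (z : nat -> C) (w : C) : Prop :=
  forall d, 0 < d -> forall N, exists n, (N <= n)%nat /\ Cmod (z n - w) < d.

Lemma ValAdh_near (u : nat -> R) x : ValAdh u x ->
  forall d, 0 < d -> forall N, exists n, (N <= n)%nat /\ Rabs (u n - x) < d.
Proof.
  intros H d Hd N. destruct (H (disc x (mkposreal d Hd)) N) as [n Hn]; [|now exists n].
  exists (mkposreal d Hd). now intros y Hy.
Qed.

Lemma ValAdh_approx_indices (u : nat -> R) x : ValAdh u x ->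
  exists psi : nat -> nat, forall k, (k <= psi k)%nat /\ Rabs (u (psi k) - x) < / (INR k + 1).
Proof.
  intros H. apply (choice (fun k n => (k <= n)%nat /\ Rabs (u n - x) < / (INR k + 1))). intros k.
  apply ValAdh_near; [exact H | apply Rinv_0_lt_compat; generalize (pos_INR k); lra].
Qed.

Lemma bounded_cluster_point (z : nat -> C) M : (forall n, Cmod (z n) <= M) ->
  exists w, cluster_point z w.
Proof.
  intros HM.
  assert (Hbd : forall x, Rabs x <= M -> -M <= x <= M)
    by (intros x Hx; generalize (Rle_abs x) (Rle_abs (- x)); rewrite Rabs_Ropp; lra).
  assert (Hre : forall n, Rabs (fst (z n)) <= M)
    by (intros n; eapply Rle_trans; [|apply HM]; eapply Rle_trans; [|apply Rmax_Cmod]; apply Rmax_l).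
  assert (Him : forall n, Rabs (snd (z n)) <= M)
    by (intros n; eapply Rle_trans; [|apply HM]; eapply Rle_trans; [|apply Rmax_Cmod]; apply Rmax_r).
  destruct (Bolzano_Weierstrass (fun n => fst (z n)) _ (compact_P3 (- M) M) (fun n => Hbd _ (Hre n)))
    as [x Hx].
  destruct (ValAdh_approx_indices _ _ Hx) as [psi Hpsi].
  destruct (Bolzano_Weierstrass (fun k => snd (z (psi k))) _ (compact_P3 (- M) M)
    (fun k => Hbd _ (Him (psi k)))) as [y Hy].
  exists (x, y). intros d Hd N.
  destruct (archimed_cor1 (d / 2) ltac:(lra)) as [k0 [Hk0 Hk0pos]].
  destruct (ValAdh_near _ _ Hy (d / 2) ltac:(lra) (max N k0)) as [p [Hp Hyp]].
  destruct (Hpsi p) as [Hpsi_ge Hxp].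
  exists (psi p). split; [lia|].
  eapply Rle_lt_trans; [apply Cmod_le_Rabs_re_im|]. simpl.
  assert (/ (INR p + 1) < d / 2).
  { eapply Rle_lt_trans; [|exact Hk0]. apply Rinv_le_contravar; [apply lt_0_INR; lia|].
    assert (INR k0 <= INR p) by (apply le_INR; lia). lra. }
  unfold Rminus in *. lra.
Qed.

Lemma cluster_point_Cmod_le (z : nat -> C) w a c q : 0 <= q < 1 -> cluster_point z w ->
  (forall n, Cmod (z n) <= a + c * q ^ n) -> Cmod w <= a.
Proof.
  intros Hq Hw Hz. apply Rle_plus_epsilon. intros eps Heps.
  destruct (pow_eventually_lt c q (eps / 2) Hq ltac:(lra)) as [N HN].
  destruct (Hw (eps / 2) ltac:(lra) N) as [n [Hn Hd]].
  specialize (HN n Hn). specialize (Hz n).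
  generalize (Cmod_sub_triangle w (z n) 0). rewrite (Cmod_sub_sym w (z n)).
  replace (w - 0)%C with w by ring. replace (z n - 0)%C with (z n) by ring. lra.
Qed.

Lemma Cmod_cpow_sub_le (w v : C) rho k : Cmod w <= rho -> Cmod v <= rho -> 1 <= rho ->
  Cmod (cpow w k - cpow v k) <= INR k * rho ^ k * Cmod (w - v).
Proof.
  intros Hw Hv Hr. induction k.
  - simpl. replace (RtoC 1 - RtoC 1)%C with (RtoC 0) by ring. rewrite Cmod_0. lra.
  - cbn [cpow].
    replace (w * cpow w k - v * cpow v k)%C with (w * (cpow w k - cpow v k) + (w - v) * cpow v k)%C
      by ring.
    eapply Rle_trans; [apply Cmod_triangle|]. rewrite !Cmod_mult, Cmod_cpow, S_INR. cbn [pow].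
    assert (0 <= Cmod v ^ k <= rho ^ k)
      by (split; [apply pow_le, Cmod_ge_0 | apply pow_incr; split; [apply Cmod_ge_0 | exact Hv]]).
    generalize (Cmod_ge_0 w) (Cmod_ge_0 (w - v)) (Cmod_ge_0 (cpow w k - cpow v k)) (pos_INR k).
    intros.
    assert (Cmod w * Cmod (cpow w k - cpow v k) <= rho * (INR k * rho ^ k * Cmod (w - v)))
      by (apply Rmult_le_compat; auto).
    assert (Cmod (w - v) * Cmod v ^ k <= Cmod (w - v) * (rho * rho ^ k))
      by (apply Rmult_le_compat_l; nra).
    nra.
Qed.

Section DominatedSeries.

Variables (c : coeffs) (Cc th rho : R).
Hypotheses (Hth : 0 <= th < 1) (Hrho : 1 <= rho)
  (Hc : forall k, Cmod (c k) * rho ^ k <= Cc * th ^ k).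

Let Cc_nonneg : 0 <= Cc.
Proof. specialize (Hc O). simpl in Hc. generalize (Cmod_ge_0 (c O)). lra. Qed.

(* Two geometric tails beyond [K], plus the first [K] terms, which are Lipschitz in [w]. *)
Lemma dominated_series_dist_le K w0 w (l0 lw : C) : Cmod w0 <= rho -> Cmod w <= rho ->
  is_series (term c w0) l0 -> is_series (term c w) lw ->
  Cmod (l0 - lw) <= 2 * (Cc * th ^ K / (1 - th)) + INR K * (Cc * INR K * Cmod (w0 - w)).
Proof.
  intros Hw0 Hw H0 Hlw.
  assert (T0 := dominated_tail _ Cc th Hth (term_dominated c rho Cc th w0 Hc Hw0) l0 K H0).
  assert (Tw := dominated_tail _ Cc th Hth (term_dominated c rho Cc th w Hc Hw) lw K Hlw).
  assert (Mid : Cmod (csum (term c w0) K - csum (term c w) K)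
                <= INR K * (Cc * INR K * Cmod (w0 - w))).
  { replace (csum (term c w0) K - csum (term c w) K)%C
      with (csum (fun k => c k * (cpow w0 k - cpow w k))%C K)
      by (clear; induction K; simpl; [ring | rewrite IHK; unfold term; ring]).
    apply csum_norm_le. intros k Hk. rewrite Cmod_mult.
    assert (D := Cmod_cpow_sub_le w0 w rho k Hw0 Hw Hrho).
    assert (Hck : Cmod (c k) * rho ^ k <= Cc).
    { eapply Rle_trans; [apply Hc|].
      assert (th ^ k <= 1) by (rewrite <- (pow1 k); apply pow_incr; lra).
      assert (0 <= th ^ k) by (apply pow_le; lra). nra. }
    assert (INR k <= INR K) by (apply le_INR; lia).
    generalize (Cmod_ge_0 (c k)) (Cmod_ge_0 (w0 - w)) (pos_INR k). intros.
    assert (0 <= rho ^ k) by (apply pow_le; lra).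
    assert (Cmod (c k) * Cmod (cpow w0 k - cpow w k)
            <= (Cmod (c k) * rho ^ k) * INR k * Cmod (w0 - w))
      by (replace ((Cmod (c k) * rho ^ k) * INR k * Cmod (w0 - w))
            with (Cmod (c k) * (INR k * rho ^ k * Cmod (w0 - w))) by ring;
          apply Rmult_le_compat_l; auto).
    assert ((Cmod (c k) * rho ^ k) * INR k * Cmod (w0 - w) <= Cc * INR K * Cmod (w0 - w))
      by (apply Rmult_le_compat_r; auto; apply Rmult_le_compat; auto; apply Rmult_le_pos; auto).
    lra. }
  generalize (Cmod_sub_triangle l0 (csum (term c w0) K) lw)
             (Cmod_sub_triangle (csum (term c w0) K) (csum (term c w) K) lw).
  rewrite (Cmod_sub_sym (csum (term c w) K) lw). lra.
Qed.

Lemma dominated_series_continuous w0 (l0 : C) : Cmod w0 <= rho -> is_series (term c w0) l0 ->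
  forall eps, 0 < eps -> exists delta, 0 < delta /\
  forall w (lw : C), Cmod w <= rho -> Cmod (w - w0) < delta -> is_series (term c w) lw ->
  Cmod (l0 - lw) < eps.
Proof.
  intros Hw0 Hl0 eps Heps.
  destruct (pow_eventually_lt (2 * Cc / (1 - th)) th (eps / 2) Hth ltac:(lra)) as [K HK].
  specialize (HK K (le_n K)).
  set (KKC := INR K * INR K * Cc).
  assert (HKKC : 0 <= KKC) by (unfold KKC; generalize (pos_INR K); intros; apply Rmult_le_pos; nra).
  exists (eps / 2 / (KKC + 1)). split; [apply Rdiv_lt_0_compat; lra|].
  intros w lw Hw Hd Hlw.
  assert (H := dominated_series_dist_le K w0 w l0 lw Hw0 Hw Hl0 Hlw).
  rewrite (Cmod_sub_sym w0) in H.
  assert (KKC * Cmod (w - w0) <= eps / 2).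
  { apply Rle_trans with ((KKC + 1) * (eps / 2 / (KKC + 1))); [|right; field; lra].
    apply Rmult_le_compat; try lra; apply Cmod_ge_0. }
  replace (2 * (Cc * th ^ K / (1 - th))) with (2 * Cc / (1 - th) * th ^ K) in H by (field; lra).
  replace (INR K * (Cc * INR K * Cmod (w - w0))) with (KKC * Cmod (w - w0)) in H
    by (unfold KKC; ring).
  lra.
Qed.

End DominatedSeries.

Lemma coeff_close_of_unif_close (u v : coeffs) r eps : in_A u -> in_A v -> 0 < r < 1 ->
  (forall z, Cmod z <= r -> forall l1 l2 : C,
     is_series (term v z) l1 -> is_series (term u z) l2 -> Cmod (l1 - l2) < eps) ->
  forall k, Cmod (v k - u k) * r ^ k <= eps.
Proof.
  intros Hu Hv Hr H.
  (* [u] and [v] converge at radius [s > r], so the coefficients of [v - u] times [r^k]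
     are dominated by [(r / s)^k], as the Cauchy estimate requires. *)
  set (s := (1 + r) / 2).
  assert (Hs : 0 < s) by (unfold s; lra).
  destruct (coeff_bound u 1 s Hu ltac:(unfold s; lra)) as [Au HAu].
  destruct (coeff_bound v 1 s Hv ltac:(unfold s; lra)) as [Av HAv].
  apply (cauchy_estimate _ r (r / s) (Av + Au)); try lra.
  - split; [apply Rlt_le, Rdiv_lt_0_compat; lra|].
    apply Rmult_lt_reg_r with s; [lra|]. field_simplify; unfold s; lra.
  - intros k.
    replace (r ^ k) with (s ^ k * (r / s) ^ k) by (rewrite <- Rpow_mult_distr; f_equal; field; lra).
    assert (0 <= (r / s) ^ k) by (apply pow_le, Rlt_le, Rdiv_lt_0_compat; lra).
    assert (Cmod (v k - u k) <= Cmod (v k) + Cmod (u k))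
      by (unfold Cminus; eapply Rle_trans; [apply Cmod_triangle | rewrite Cmod_opp; lra]).
    assert (0 <= s ^ k) by (apply pow_le; lra).
    specialize (HAu k). specialize (HAv k).
    assert (Cmod (v k - u k) * s ^ k <= Av + Au) by nra.
    nra.
  - intros z Hz l Hl.
    destruct (Hv z ltac:(lra)) as [l1 H1]. destruct (Hu z ltac:(lra)) as [l2 H2].
    replace l with (l1 - l2)%C.
    + apply Rlt_le, (H z); auto. lra.
    + apply (is_series_C_unique (fun k => term v z k - term u z k)%C).
      * apply (is_series_minus (V := C_NormedModule)); assumption.
      * apply (is_series_ext (term (fun k => v k - u k)%C z)); [|exact Hl].
        intros n. change (term (fun k => v k - u k)%C z n = term v z n - term u z n)%C.
        unfold term. ring.
Qed.

Lemma prod_pow_le a b r R1 th X Y k : 0 <= a -> 0 <= b -> 0 < r -> 0 < R1 -> 0 <= th ->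
  a * r ^ k <= X -> b * R1 ^ k <= Y -> a * b * (th * (r * R1)) ^ k <= X * Y * th ^ k.
Proof.
  intros. rewrite !Rpow_mult_distr.
  assert (0 <= r ^ k) by (apply pow_le; lra). assert (0 <= R1 ^ k) by (apply pow_le; lra).
  assert (0 <= th ^ k) by (apply pow_le; lra).
  replace (a * b * (th ^ k * (r ^ k * R1 ^ k))) with ((a * r ^ k) * (b * R1 ^ k) * th ^ k) by ring.
  apply Rmult_le_compat_r; auto.
  apply Rmult_le_compat; auto; apply Rmult_le_pos; auto.
Qed.

Lemma hadamard_series_close (v u b : coeffs) r R1 th eps B w (l1 l2 : C) :
  0 < r -> 0 < R1 -> 0 <= th < 1 ->
  (forall k, Cmod (v k - u k) * r ^ k <= eps) -> (forall k, Cmod (b k) * R1 ^ k <= B) ->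
  Cmod w <= th * (r * R1) ->
  is_series (term (hadamard v b) w) l1 -> is_series (term (hadamard u b) w) l2 ->
  Cmod (l1 - l2) <= eps * B / (1 - th).
Proof.
  intros Hr HR1 Hth Heps HB Hw H1 H2.
  apply (dominated_sum_le (fun k => term (hadamard v b) w k - term (hadamard u b) w k)%C (eps * B) th);
    [exact Hth | | apply (is_series_minus (V := C_NormedModule)); assumption].
  intros k.
  replace (term (hadamard v b) w k - term (hadamard u b) w k)%C
    with (term (hadamard (fun k => v k - u k)%C b) w k) by (unfold term, hadamard; ring).
  eapply Rle_trans; [apply Cmod_term_le, Hw|]. unfold hadamard. rewrite Cmod_mult.
  apply prod_pow_le; auto; try apply Cmod_ge_0; lra.
Qed.

Lemma hadamard_unif_cvg (us : nat -> coeffs) (u b : coeffs) r R1 th B :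
  in_A u -> (forall n, in_A (us n)) -> loc_unif_cvg us u ->
  0 < r < 1 -> 0 < R1 -> 0 <= th < 1 -> (forall k, Cmod (b k) * R1 ^ k <= B) ->
  forall eps, 0 < eps -> exists N, forall n, (N <= n)%nat -> forall w, Cmod w <= th * (r * R1) ->
  forall l1 l2 : C, is_series (term (hadamard (us n) b) w) l1 ->
  is_series (term (hadamard u b) w) l2 -> Cmod (l1 - l2) <= eps.
Proof.
  intros Hu Hus Hcv Hr HR1 Hth HB eps Heps.
  assert (HB0 : 0 <= B) by (specialize (HB O); simpl in HB; generalize (Cmod_ge_0 (b O)); lra).
  set (eps' := eps * (1 - th) / (B + 1)).
  assert (Heps' : 0 < eps') by (apply Rdiv_lt_0_compat; nra).
  destruct (Hcv r Hr eps' Heps') as [N HN].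
  exists N. intros n Hn w Hw l1 l2 H1 H2.
  assert (Hcoef : forall k, Cmod (us n k - u k) * r ^ k <= eps')
    by (apply coeff_close_of_unif_close; auto; intros z Hz; apply HN; auto).
  eapply Rle_trans; [apply (hadamard_series_close (us n) u b r R1 th eps' B w); auto; lra|].
  unfold eps'. apply Rmult_le_reg_r with (1 - th); [lra|].
  replace (eps * (1 - th) / (B + 1) * B / (1 - th) * (1 - th)) with (eps * (1 - th) * (B / (B + 1)))
    by (field; lra).
  rewrite <- (Rmult_1_r (eps * (1 - th))) at 2.
  apply Rmult_le_compat_l; [nra|].
  apply Rmult_le_reg_r with (B + 1); [lra|]. field_simplify; lra.
Qed.

Lemma hadamard_zero_at_cluster_point (us : nat -> coeffs) (u b : coeffs) (zs : nat -> C) w0 R1 B :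
  in_A u -> (forall n, in_A (us n)) -> loc_unif_cvg us u ->
  1 < R1 -> (forall k, Cmod (b k) * R1 ^ k <= B) ->
  (forall n, Cmod (zs n) <= (R1 + 3) / 4) ->
  (forall n, is_series (term (hadamard (us n) b) (zs n)) (RtoC 0)) ->
  cluster_point zs w0 -> Cmod w0 <= (R1 + 3) / 4 -> ~ nonzero_at (hadamard u b) w0.
Proof.
  intros Hu Hus Hcv HR1 HB Hzs Hzero Hw0 Hw0_rho Hnz.
  (* Any [r < 1], [th < 1] with [th * r * R1 > 1] would do. *)
  set (r := (R1 + 1) / (2 * R1)). set (th := (R1 + 3) / (2 * (R1 + 1))).
  assert (Hr : 0 < r < 1).
  { unfold r. split; [apply Rdiv_lt_0_compat; lra|].
    apply Rmult_lt_reg_r with (2 * R1); [lra|]. field_simplify; lra. }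
  assert (Hth : 0 <= th < 1).
  { unfold th. split; [apply Rlt_le, Rdiv_lt_0_compat; lra|].
    apply Rmult_lt_reg_r with (2 * (R1 + 1)); [lra|]. field_simplify; lra. }
  assert (Hrho : (R1 + 3) / 4 = th * (r * R1)) by (unfold th, r; field; lra).
  rewrite Hrho in Hzs, Hw0_rho.
  destruct (coeff_bound u 1 r Hu ltac:(lra)) as [A HA].
  assert (Hdom : forall k, Cmod (hadamard u b k) * (th * (r * R1)) ^ k <= (A * B) * th ^ k).
  { intros k. unfold hadamard. rewrite Cmod_mult.
    apply prod_pow_le; try apply Cmod_ge_0; auto; lra. }
  destruct (dominated_ex_series _ _ _ Hth (term_dominated _ _ _ _ w0 Hdom Hw0_rho)) as [l0 Hl0].
  set (eta := Cmod l0).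
  assert (Heta : 0 < eta) by (apply Cmod_gt_0, Hnz, Hl0).
  assert (Hrho1 : 1 <= th * (r * R1)) by (rewrite <- Hrho; lra).
  destruct (dominated_series_continuous _ _ _ _ Hth Hrho1 Hdom w0 l0 Hw0_rho Hl0 (eta / 2))
    as [delta [Hdelta Hcont]]; [lra|].
  destruct (hadamard_unif_cvg us u b r R1 th B Hu Hus Hcv Hr ltac:(lra) Hth HB (eta / 4))
    as [N HN]; [lra|].
  destruct (Hw0 delta Hdelta N) as [n [Hn Hnw]].
  destruct (dominated_ex_series _ _ _ Hth (term_dominated _ _ _ _ (zs n) Hdom (Hzs n))) as [lw Hlw].
  specialize (HN n Hn (zs n) (Hzs n) _ lw (Hzero n) Hlw).
  specialize (Hcont (zs n) lw (Hzs n) Hnw Hlw).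
  generalize (Cmod_sub_triangle l0 lw 0). rewrite (Cmod_sub_sym lw 0).
  replace (l0 - 0)%C with l0 by ring. fold eta. lra.
Qed.

Lemma hadamard_nonzero_beyond_unit_disk (U : coeffs -> Prop) (b : coeffs) R1 B :
  (forall f, U f -> in_A f) -> compact_A U -> 1 < R1 -> (forall k, Cmod (b k) * R1 ^ k <= B) ->
  (forall u, U u -> forall w, Cmod w <= 1 -> nonzero_at (hadamard u b) w) ->
  exists rho, 1 < rho /\ forall u, U u -> forall w, Cmod w < rho -> nonzero_at (hadamard u b) w.
Proof.
  intros HU Hcomp HR1 HB Hnz.
  set (rho := (R1 + 3) / 4).
  set (rad := fun n => 1 + (rho - 1) * (/ 2) ^ n).
  assert (Hrad_mono : forall m n, (m <= n)%nat -> rad n <= rad m).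
  { intros m n Hmn. unfold rad. rewrite !pow_inv.
    apply Rplus_le_compat_l, Rmult_le_compat_l; [unfold rho; lra|].
    apply Rinv_le_contravar; [apply pow_lt; lra | apply Rle_pow; [lra | exact Hmn]]. }
  assert (Hrad : forall n, 1 < rad n <= rho).
  { intros n. split.
    - unfold rad, rho. assert (0 < (/ 2) ^ n) by (apply pow_lt; lra). nra.
    - replace rho with (rad O) by (unfold rad; simpl; ring). apply Hrad_mono. lia. }
  apply NNPP. intros Hno.
  assert (Hzero : forall n, exists p : coeffs * C, U (fst p) /\ Cmod (snd p) < rad n /\
                    is_series (term (hadamard (fst p) b) (snd p)) (RtoC 0)).
  { intros n. apply NNPP. intros Hn. apply Hno. exists (rad n). split; [apply Hrad|].
    intros u Hu w Hw l Hl ->. apply Hn. now exists (u, w). }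
  destruct (choice _ Hzero) as [sel Hsel].
  destruct (Hcomp (fun n => fst (sel n)) (fun n => proj1 (Hsel n)))
    as [phi [u [Hphi [Uu Hcv]]]].
  assert (Hphi_ge : forall n, (n <= phi n)%nat)
    by (induction n; [lia | specialize (Hphi n); lia]).
  set (zs := fun n => snd (sel (phi n))).
  assert (Hzs : forall n, Cmod (zs n) <= rad n).
  { intros n. destruct (Hsel (phi n)) as [_ [H _]]. apply Rlt_le.
    eapply Rlt_le_trans; [exact H | apply Hrad_mono, Hphi_ge]. }
  assert (Hzs_rho : forall n, Cmod (zs n) <= rho)
    by (intros n; eapply Rle_trans; [apply Hzs | apply Hrad]).
  destruct (bounded_cluster_point zs rho Hzs_rho) as [w0 Hw0].
  assert (Hw0_disk : Cmod w0 <= 1) by (apply (cluster_point_Cmod_le zs w0 1 (rho - 1) (/ 2)); auto; lra).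
  apply (hadamard_zero_at_cluster_point (fun n => fst (sel (phi n))) u b zs w0 R1 B (HU u Uu)
           (fun n => HU _ (proj1 (Hsel (phi n)))) Hcv HR1 HB Hzs_rho
           (fun n => proj2 (proj2 (Hsel (phi n)))) Hw0 ltac:(unfold rho; lra)).
  exact (Hnz u Uu w0 Hw0_disk).
Qed.

Lemma nonzero_at_ext a z a' z' : (forall k, term a z k = term a' z' k) ->
  nonzero_at a z -> nonzero_at a' z'.
Proof.
  intros H Hn l Hl. apply Hn. apply (is_series_ext (term a' z')); [|exact Hl].
  intros k. symmetry. apply H.
Qed.

Lemma term_Px g x z k : term (Px x g) z k = term g (x * z)%C k.
Proof. unfold term, Px. rewrite cpow_mult. ring. Qed.

Lemma nonzero_at_hadamard_Px f g x z :
  nonzero_at (hadamard f (Px x g)) z <-> nonzero_at (hadamard f g) (x * z)%C.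
Proof.
  assert (E : forall k, term (hadamard f (Px x g)) z k = term (hadamard f g) (x * z)%C k)
    by (intros k; unfold term, hadamard, Px; rewrite cpow_mult; ring).
  split; apply nonzero_at_ext; intros k; [| symmetry]; apply E.
Qed.

Lemma nonzero_at_hadamard_comm f g z :
  nonzero_at (hadamard f g) z -> nonzero_at (hadamard g f) z.
Proof. apply nonzero_at_ext. intros k. unfold term, hadamard. ring. Qed.

Lemma dual_antimono (A B : coeffs -> Prop) : (forall f, A f -> B f) ->
  forall g, dual B g -> dual A g.
Proof. intros H g [Hg Hgn]. split; auto. Qed.

Lemma sub_dual_dual (W : coeffs -> Prop) : (forall f, W f -> in_A0 f) ->
  forall f, W f -> dual (dual W) f.
Proof.
  intros HW f Hf. split; [auto|].
  intros g [_ Hg] z Hz. apply nonzero_at_hadamard_comm. auto.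
Qed.

Lemma dual_dual_dual (W : coeffs -> Prop) : (forall f, W f -> in_A0 f) ->
  set_eq (dual (dual (dual W))) (dual W).
Proof.
  intros HW g. split.
  - apply dual_antimono, sub_dual_dual, HW.
  - apply sub_dual_dual. intros f [Hf _]. exact Hf.
Qed.

Lemma set_eq_dual A B : set_eq A B -> set_eq (dual A) (dual B).
Proof. intros H g. split; apply dual_antimono; intros f; apply H. Qed.

Lemma set_eq_sym A B : set_eq A B -> set_eq B A.
Proof. intros H f. symmetry. apply H. Qed.

Lemma set_eq_dual_dual_iff (U V : coeffs -> Prop) :
  (forall f, U f -> in_A0 f) -> (forall f, V f -> in_A0 f) ->
  set_eq (dual (dual U)) (dual (dual V)) <-> set_eq (dual U) (dual V).
Proof.
  intros HU HV. split; [|apply set_eq_dual].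
  intros H g. rewrite <- (dual_dual_dual U HU g), <- (dual_dual_dual V HV g).
  apply set_eq_dual, H.
Qed.

Lemma Px_in_AbarD0 g z : in_A0 g -> Cmod z < 1 -> in_AbarD0 (Px z g).
Proof.
  intros [Hg Hg0] Hz. assert (H0 := Cmod_ge_0 z). split.
  - exists (2 / (1 + Cmod z)). split.
    { apply Rmult_lt_reg_r with (1 + Cmod z); [lra|]. field_simplify; lra. }
    intros w Hw. apply (ex_series_ext (term g (z * w)%C)); [intros k; symmetry; apply term_Px|].
    apply Hg. rewrite Cmod_mult.
    assert (Cmod z * Cmod w <= Cmod z * (2 / (1 + Cmod z))) by (apply Rmult_le_compat_l; lra).
    assert (Cmod z * (2 / (1 + Cmod z)) < 1).
    { apply Rmult_lt_reg_r with (1 + Cmod z); [lra|]. field_simplify; lra. }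
    lra.
  - unfold Px. simpl. rewrite Hg0. ring.
Qed.

Lemma Px_in_A0 g x R : (forall z, Cmod z < R -> ex_series (term g z)) -> 0 < Cmod x <= R ->
  g O = RtoC 1 -> in_A0 (Px x g).
Proof.
  intros Hg Hx Hg0. split.
  - intros z Hz. apply (ex_series_ext (term g (x * z)%C)); [intros k; symmetry; apply term_Px|].
    apply Hg. rewrite Cmod_mult.
    assert (Cmod x * Cmod z < Cmod x * 1) by (apply Rmult_lt_compat_l; lra). lra.
  - unfold Px. simpl. rewrite Hg0. ring.
Qed.

Lemma dual_incl_of_dualT_eq (U V : coeffs -> Prop) : set_eq (dualT U) (dualT V) ->
  forall g, dual U g -> dual V g.
Proof.
  intros H g [Hg Hgn]. split; [exact Hg|]. intros f Hf z Hz.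
  assert (HT : dualT U (Px z g)).
  { split; [apply Px_in_AbarD0; assumption|]. intros u Hu.
    apply nonzero_at_hadamard_Px. rewrite Cmult_1_r. auto. }
  apply H in HT. destruct HT as [_ HT].
  specialize (HT f Hf). apply nonzero_at_hadamard_Px in HT. now rewrite Cmult_1_r in HT.
Qed.

Lemma dualT_incl_of_dual_eq (U V : coeffs -> Prop) :
  (forall f, U f -> in_A f) -> compact_A U -> complete (dualT U) ->
  set_eq (dual U) (dual V) -> forall g, dualT U g -> dualT V g.
Proof.
  intros HU Hc Hcomp H g Hg.
  pose proof Hg as [[[R [HR HRs]] Hg0] _].
  destruct (coeff_bound g R ((1 + R) / 2) HRs ltac:(lra)) as [B HB].
  assert (Hnz : forall u, U u -> forall w, Cmod w <= 1 -> nonzero_at (hadamard u g) w).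
  { intros u Hu w Hw. destruct (Hcomp _ Hg w Hw) as [_ Hx].
    specialize (Hx u Hu). apply nonzero_at_hadamard_Px in Hx. now rewrite Cmult_1_r in Hx. }
  destruct (hadamard_nonzero_beyond_unit_disk U g ((1 + R) / 2) B HU Hc ltac:(lra) HB Hnz)
    as [rho [Hrho Hrhon]].
  set (s := (1 + Rmin rho R) / 2).
  assert (Hs : 1 < s /\ s < rho /\ s < R).
  { unfold s. generalize (Rmin_l rho R) (Rmin_r rho R) (Rmin_glb_lt rho R 1 Hrho HR). lra. }
  assert (HP : dual U (Px (RtoC s) g)).
  { split.
    - apply (Px_in_A0 g (RtoC s) R HRs); [rewrite Cmod_RtoC; lra | exact Hg0].
    - intros u Hu z Hz. apply nonzero_at_hadamard_Px, Hrhon; [exact Hu|].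
      rewrite Cmod_mult, Cmod_RtoC by lra.
      assert (s * Cmod z < s * 1) by (apply Rmult_lt_compat_l; lra). lra. }
  apply H in HP. destruct HP as [_ HP]. split; [apply Hg|]. intros f Hf.
  assert (Hinv : Cmod (RtoC (/ s)) < 1).
  { rewrite Cmod_RtoC by (apply Rlt_le, Rinv_0_lt_compat; lra).
    apply Rmult_lt_reg_r with s; [lra|]. rewrite Rinv_l by lra. lra. }
  specialize (HP f Hf _ Hinv). apply nonzero_at_hadamard_Px in HP.
  now rewrite <- RtoC_mult, Rinv_r in HP by lra.
Qed.

Lemma set_eq_dualT_iff_dual (U V : coeffs -> Prop) :
  (forall f, U f -> in_A f) -> (forall f, V f -> in_A f) ->
  compact_A U -> compact_A V -> complete (dualT U) -> complete (dualT V) ->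
  set_eq (dualT U) (dualT V) <-> set_eq (dual U) (dual V).
Proof.
  intros HU HV cU cV pU pV. split; intros H g; split.
  - now apply dual_incl_of_dualT_eq.
  - now apply dual_incl_of_dualT_eq, set_eq_sym.
  - now apply dualT_incl_of_dual_eq.
  - now apply dualT_incl_of_dual_eq, set_eq_sym.
Qed.

Theorem corollary2 (U V : coeffs -> Prop) :
  (forall f, U f -> in_A0 f) -> (forall f, V f -> in_A0 f) ->
  compact_A U -> compact_A V ->
  complete (dualT U) -> complete (dualT V) ->
  (set_eq (dual (dual U)) (dual (dual V)) <-> set_eq (dualT U) (dualT V)) /\
  (set_eq (dualT U) (dualT V) <-> set_eq (dual U) (dual V)).
Proof.
  intros HU HV cU cV pU pV.
  assert (Hbc : set_eq (dualT U) (dualT V) <-> set_eq (dual U) (dual V)).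
  { apply set_eq_dualT_iff_dual; auto; intros f Hf; [apply HU | apply HV]; exact Hf. }
  split; [|exact Hbc].
  rewrite (set_eq_dual_dual_iff U V HU HV). symmetry. exact Hbc.
Qed.
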